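(* In the setting of the context, assume (G2') and ($\overline G{}_3'$), and let $\tilde\rho$ be a metric on $X$ inducing its topology, with constants $\gamma\ge1$, $C\ge1$ such that $C^{-1}\tilde\rho(x,y)^{-\gamma}\le\tilde G(x,y)\le C\tilde\rho(x,y)^{-\gamma}$ for all $x,y\in X$. Then there exists $\tilde c_3\ge1$ such that for all $x\in X_0$, $0<r<\tilde R_0(x)$ and $y\in X\setminus\tilde U(x,r)$, $$\big\|\tilde\varepsilon_y^{\overline{\tilde U(x,r)}}\big\|\ \ge\ \tilde c_3^{-1}\,r^{\gamma}\,\tilde G(y,x).$$
   Context: $(X,\rho)$ separable metric space, $X_0\subsetneq X$ open. For every open $U\subseteq X$ and $x\in X$ a finite Borel measure $\mu_x^U$ is given with, for all open $U,V$ and $x$: $\mu_x^U(U)=0$, $\|\mu_x^U\|:=\mu_x^U(X)\le1$, $\mu_x^U=\varepsilon_x$ (Dirac) if $x\notin U$; $y\mapsto\mu_y^U(E)$ universally measurable for Borel $E$; $\mu_x^U=\int\mu_y^U\,d\mu_x^V(y)$ if $V\subseteq U$. For closed $A$, $\varepsilon_x^A:=\mu_x^{X\setminus A}$ and $\tilde\varepsilon_x^A:=\frac{w}{w(x)}\varepsilon_x^A$ (the measure with density $w/w(x)$ w.r.t. $\varepsilon_x^A$). $G\colon X\times X\to(0,\infty]$ Borel; $V(x,s):=\{y:G(y,x)^{-1}<s\}$; $S_0(x):=\sup\{s>0:\overline{V(x,s)}\subseteq X_0\}$ for $x\in X_0$. $\tilde U(x,r):=\{y:\tilde\rho(x,y)<r\}$,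 $\tilde R_0(x):=\sup\{r>0:\overline{\tilde U(x,r)}\subseteq X_0\}$. (G2'): for every $x$, $G(x,x)=\lim_{y\to x}G(y,x)=\infty$; there is a Borel $w$ with $0<w\le1$ and $\int w\,d\mu_x^U\le w(x)$ for all open $U$, $x$; there is $\tilde c>1$ with $\tilde G(x,z)\wedge\tilde G(y,z)\le\tilde c\tilde G(x,y)$ for all $x,y,z$, where $\tilde G(x,y):=G(x,y)/(w(x)w(y))$; $\lambda:=\inf w(X_0)>0$; for each $x$ and neighborhood $V$ of $x$, $G(\cdot,x)/w$ is bounded on $X\setminus V$. ($\overline G{}_3'$): there is $c_3\ge1$ with $\|\varepsilon_y^{\overline{V(x,s)}}\|\ge c_3^{-1}sG(y,x)$ for all $x\in X_0$, $0<s<S_0(x)$, $y\in X\setminus V(x,s)$. *)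

From HB Require Import structures.
From mathcomp Require Import all_boot all_order all_algebra.
From mathcomp Require Import all_classical all_reals all_analysis measurable_realfun.
Set Implicit Arguments. Unset Strict Implicit. Unset Printing Implicit Defensive.
Import Order.TTheory GRing.Theory Num.Theory.
Import numFieldNormedType.Exports.
Local Open Scope classical_set_scope.
Local Open Scope ring_scope.

Section MetricDefs.
Context {R : realType} {X : Type}.

Definition is_metric (rho : X -> X -> R) : Prop :=
  [/\ (forall x y, 0 <= rho x y), (forall x y, rho x y = 0 <-> x = y),
      (forall x y, rho x y = rho y x) &
      (forall x y z, rho x z <= rho x y + rho y z)].

Definition mball (rho : X -> X -> R) (x : X) (r : R) : set X :=
  [set y | rho x y < r].

Definition mopen (rho : X -> X -> R) (U : set X) : Prop :=
  forall x, U x -> exists2 e : R, 0 < e & mball rho x e `<=` U.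

Definition mclosure (rho : X -> X -> R) (A : set X) : set X :=
  [set x | forall e : R, 0 < e -> exists y, A y /\ rho x y < e].

Definition mnbhd (rho : X -> X -> R) (x : X) (V : set X) : Prop :=
  exists U, [/\ mopen rho U, U x & U `<=` V].

Definition mseparable (rho : X -> X -> R) : Prop :=
  exists D : set X, countable D /\
    forall x (e : R), 0 < e -> exists y, D y /\ rho x y < e.

Definition same_topology (rho1 rho2 : X -> X -> R) : Prop :=
  forall U, mopen rho1 U <-> mopen rho2 U.

End MetricDefs.

Section BalayageDefs.
Local Open Scope ereal_scope.
Context {d : measure_display} {X : measurableType d} {R : realType}.

Definition borel_structure (rho : X -> X -> R) : Prop :=
  (@measurable d X) = <<s mopen rho >>.

Definition univ_measurable (f : X -> \bar R) : Prop :=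
  forall nu : {finite_measure set X -> \bar R},
  forall B : set (\bar R), measurable B ->
    completed_algebra_gen nu (f @^-1` B).

(** The family (mu_x^U) of the context, mu U x = mu_x^U. *)
Definition balayage_family (rho : X -> X -> R)
    (mu : set X -> X -> {measure set X -> \bar R}) : Prop :=
  [/\ (forall U x, mopen rho U -> mu U x U = 0),
      (forall U x, mopen rho U -> mu U x setT <= 1),
      (forall U x, mopen rho U -> ~ U x ->
          forall E, measurable E -> mu U x E = \d_x E),
      (forall U E, mopen rho U -> measurable E ->
          univ_measurable (fun y => mu U y E)) &
      (forall U V x E, mopen rho U -> mopen rho V -> V `<=` U ->
          measurable E ->
          mu U x E = \int[mu V x]_y (mu U y E))].

Definition eps (mu : set X -> X -> {measure set X -> \bar R}) (A : set X)
  (x : X) : {measure set X -> \bar R} := mu (~` A) x.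

Definition eps_norm (mu : set X -> X -> {measure set X -> \bar R})
  (A : set X) (x : X) : \bar R := eps mu A x setT.

(** ||tilde eps_x^A|| = total mass of the measure with density w/w(x)
    w.r.t. eps_x^A *)
Definition teps_norm (mu : set X -> X -> {measure set X -> \bar R})
  (w : X -> R) (A : set X) (x : X) : \bar R :=
  \int[eps mu A x]_z ((w z / w x)%R)%:E.

Definition Gt (G : X -> X -> \bar R) (w : X -> R) (x y : X) : \bar R :=
  G x y * ((w x * w y)^-1)%R%:E.

Definition Vset (G : X -> X -> \bar R) (x : X) (s : R) : set X :=
  [set y | (G y x)^-1 < s%:E].

Definition S0 (rho : X -> X -> R) (X0 : set X) (G : X -> X -> \bar R)
  (x : X) : \bar R :=
  ereal_sup [set s%:E | s in
    [set s : R | (0 < s)%R /\ mclosure rho (Vset G x s) `<=` X0]].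

Definition R0t (rho rhot : X -> X -> R) (X0 : set X) (x : X) : \bar R :=
  ereal_sup [set r%:E | r in
    [set r : R | (0 < r)%R /\ mclosure rho (mball rhot x r) `<=` X0]].

Definition G2' (rho : X -> X -> R) (X0 : set X)
    (mu : set X -> X -> {measure set X -> \bar R})
    (G : X -> X -> \bar R) (w : X -> R) : Prop :=
  (forall x, G x x = +oo /\
         forall M : R, exists2 del : R, (0 < del)%R &
           forall y, y <> x -> (rho x y < del)%R -> M%:E <= G y x) /\
  (measurable_fun setT w /\ (forall x, (0 < w x <= 1)%R) /\
      (forall U x, mopen rho U -> \int[mu U x]_z (w z)%:E <= (w x)%:E)) /\
  (exists ct : R, (1 < ct)%R /\ forall x y z,
          mine (Gt G w x z) (Gt G w y z) <= ct%:E * Gt G w x y) /\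
  (exists2 lam : R, (0 < lam)%R & forall x, X0 x -> (lam <= w x)%R) /\
  (forall x V, mnbhd rho x V -> exists M : R,
          forall y, ~ V y -> G y x * ((w y)^-1)%R%:E <= M%:E).

Definition G3' (rho : X -> X -> R) (X0 : set X)
    (mu : set X -> X -> {measure set X -> \bar R})
    (G : X -> X -> \bar R) : Prop :=
  exists c3 : R, (1 <= c3)%R /\
    forall x, X0 x -> forall s : R, (0 < s)%R -> s%:E < S0 rho X0 G x ->
    forall y, ~ Vset G x s y ->
      (c3^-1 * s)%R%:E * G y x <= eps_norm mu (mclosure rho (Vset G x s)) y.

End BalayageDefs.

From HB Require Import structures.
From mathcomp Require Import all_boot all_order all_algebra.
From mathcomp Require Import all_classical all_reals all_analysis measurable_realfun.
From mathcomp Require Import ring lra.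
Set Implicit Arguments. Unset Strict Implicit. Unset Printing Implicit Defensive.
Import Order.TTheory GRing.Theory Num.Theory.
Import numFieldNormedType.Exports.
Local Open Scope classical_set_scope.
Local Open Scope ring_scope.

(* Since [w <= 1], the upper bound [Gt <= C rhot^-gamma] gives
   [G(., x) <= C rhot(., x)^-gamma], so the level set [V(x, r^gamma / C)] lies
   in the ball [Ut(x, r)]; for [r < Rt_0(x)] this makes [s := r^gamma / C] an
   admissible radius in (bar G_3'), and monotonicity of the balayage mass in
   the set yields [||eps_y^{closure Ut(x,r)}|| >= c3^-1 s G(y, x)].  Finally
   [eps_y^A] lives on [A], where [w >= lambda], so the weighted mass is at
   least [lambda / w(y)] times the mass, while [Gt(y, x) <= G(y, x) / (w(y) lambda)]
   because [x] is in [X_0]. *)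

Section MetricClosure.
Variables (R : realType) (X : Type) (rho : X -> X -> R).

Lemma mball_center x r : is_metric rho -> 0 < r -> mball rho x r x.
Proof. by case=> _ /(_ x x) [_ rho_xx] _ _; rewrite /mball /= rho_xx. Qed.

Lemma mclosure_mono (A B : set X) :
  A `<=` B -> mclosure rho A `<=` mclosure rho B.
Proof.
by move=> AB x Ax e e0; have [y [Ay hy]] := Ax e e0; exists y; split => //; exact: AB.
Qed.

Lemma mopen_setC_mclosure (A : set X) :
  is_metric rho -> mopen rho (~` mclosure rho A).
Proof.
case=> _ _ _ rho_tri x /= nAx.
have [e [e0 he]] : exists e : R, 0 < e /\ forall y, A y -> e <= rho x y.
  apply: contra_notP nAx => H e e0.
  apply: contra_notP H => H; exists e; split => // y Ay.
  by rewrite leNgt; apply/negP => hy; apply: H; exists y.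
exists (e / 2); first by rewrite divr_gt0.
move=> z /= xz Az.
have [y [Ay zy]] := Az (e / 2) (divr_gt0 e0 (ltr0Sn _ 1)).
have := he y Ay; have := rho_tri x z y; rewrite /mball /= in xz; lra.
Qed.

End MetricClosure.

Lemma measurable_mclosure (R : realType) d (X : measurableType d)
    (rho : X -> X -> R) (A : set X) :
  is_metric rho -> borel_structure rho -> measurable (mclosure rho A).
Proof.
move=> rho_metric rho_borel; rewrite -[mclosure rho A]setCK.
apply: measurableC; rewrite rho_borel; apply: sub_sigma_algebra.
exact: mopen_setC_mclosure.
Qed.

Lemma lt_R0t (R : realType) d (X : measurableType d) (rho rhot : X -> X -> R)
    (X0 : set X) x (r : R) :
  (r%:E < R0t rho rhot X0 x)%E ->
  exists2 r' : R, r < r' & mclosure rho (mball rhot x r') `<=` X0.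
Proof.
move=> /ereal_sup_gt [_ [r' [_ ball_X0] <-]]; rewrite lte_fin => r_lt.
by exists r'.
Qed.

Lemma mclosure_mball_sub (R : realType) d (X : measurableType d)
    (rho rhot : X -> X -> R) (X0 : set X) x (r : R) :
  (r%:E < R0t rho rhot X0 x)%E -> mclosure rho (mball rhot x r) `<=` X0.
Proof.
case/lt_R0t => r' r_lt; apply: subset_trans; apply: mclosure_mono => z.
by rewrite /mball /= => h; lra.
Qed.

Local Open Scope ereal_scope.

(* Unlike [ge0_le_integral], no measurability is required: the integral of a
   nonnegative function is a supremum over the simple functions below it. *)
Lemma nonmeas_ge0_le_integral d (T : measurableType d) (R : realType)
    (mu : {measure set T -> \bar R}) (f1 f2 : T -> \bar R) :
  (forall x, 0 <= f1 x) -> (forall x, f1 x <= f2 x) ->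
  \int[mu]_x f1 x <= \int[mu]_x f2 x.
Proof.
move=> f1_ge0 f12.
have f2_ge0 x : 0 <= f2 x by exact: le_trans (f12 x).
rewrite !ge0_integralTE //.
by apply: ereal_sup_le => _ [h /= hf1 <-]; exists h => //= x; exact: le_trans (hf1 x) (f12 x).
Qed.

Section BalayageMass.
Variables (d : measure_display) (X : measurableType d) (R : realType).
Variables (rho : X -> X -> R) (mu : set X -> X -> {measure set X -> \bar R}).
Hypothesis mu_balayage : balayage_family rho mu.

(* Balayage on [B] factors through balayage on [A], and each [eps_z^A] has
   mass at most one. *)
Lemma le_eps_norm (A B : set X) y :
  mopen rho (~` A) -> mopen rho (~` B) -> B `<=` A ->
  eps_norm mu B y <= eps_norm mu A y.
Proof.
case: mu_balayage => _ mass_le1 _ _ mu_comp oA oB BA.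
rewrite /eps_norm /eps (mu_comp (~` B) (~` A) y setT oB oA) //; last first.
  by move=> z nAz Bz; apply: nAz; exact: BA.
apply: le_trans (_ : \int[mu (~` A) y]_z (cst 1 z) <= _).
  by apply: nonmeas_ge0_le_integral => z; [exact: measure_ge0 | exact: mass_le1].
by rewrite integral_cst // mul1e.
Qed.

Lemma eps_normE (A : set X) y :
  mopen rho (~` A) -> measurable A -> eps_norm mu A y = eps mu A y A.
Proof.
case: mu_balayage => mu_U _ _ _ _ oA mA.
rewrite /eps_norm -(setUv A) measureU //; last by rewrite setICr.
- by rewrite /eps [X in _ + X]mu_U // adde0.
- exact: measurableC.
Qed.

Lemma teps_norm_ge (w : X -> R) (A : set X) (lam : R) y :
  mopen rho (~` A) -> measurable A ->
  measurable_fun setT w -> (forall z, (0 < w z)%R) -> (0 <= lam)%R ->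
  (forall z, A z -> (lam <= w z)%R) ->
  (lam / w y)%:E * eps_norm mu A y <= teps_norm mu w A y.
Proof.
move=> oA mA mw w_gt0 lam_ge0 lam_w.
have mf : measurable_fun setT (fun z => ((w z / w y)%R)%:E).
  by apply: measurableT_comp => //; apply: measurable_funM => //; exact: measurable_cst.
have f_ge0 z : 0 <= ((w z / w y)%R)%:E by rewrite lee_fin divr_ge0 // ltW.
rewrite /teps_norm.
apply: le_trans (ge0_subset_integral _ _ _ mf (fun z _ => f_ge0 z) (subsetT A)) => //.
rewrite eps_normE // -integral_cst //.
apply: ge0_le_integral => //.
- by move=> z _; rewrite lee_fin divr_ge0 // ltW.
- exact: measurable_funS mf.
- by move=> z Az; rewrite lee_fin ler_pM2r ?invr_gt0 //; exact: lam_w.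
Qed.

End BalayageMass.

Local Close Scope ereal_scope.

Section GreenBounds.
Variables (R : realType) (d : measure_display) (X : measurableType d).
Variables (G : X -> X -> \bar R) (w : X -> R) (rhot : X -> X -> R) (gamma C : R).
Hypothesis G_gt0 : forall x y, (0 < G x y)%E.
Hypothesis w_01 : forall z, 0 < w z <= 1.
Hypothesis rhot_metric : is_metric rhot.
Hypothesis gamma_gt0 : 0 < gamma.
Hypothesis C_gt0 : 0 < C.
Hypothesis Gt_le : forall {x y}, x <> y ->
  (Gt G w x y <= (C * rhot x y `^ (- gamma))%:E)%E.

Lemma w_gt0 z : 0 < w z.
Proof. by case/andP: (w_01 z). Qed.

Lemma wM_le1 z x : w z * w x <= 1.
Proof.
by case/andP: (w_01 z) => ? ?; case/andP: (w_01 x) => ? ?; rewrite mulr_ile1 // ltW.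
Qed.

Lemma G_fin_of_Gt_le {z x} {K : R} :
  (Gt G w z x <= K%:E)%E ->
  exists g : R, [/\ G z x = g%:E, 0 < g, Gt G w z x = (g / (w z * w x))%:E &
     g / (w z * w x) <= K].
Proof.
rewrite /Gt; have := G_gt0 z x.
have w2_gt0 : 0 < (w z * w x)^-1 by rewrite invr_gt0 mulr_gt0 ?w_gt0.
case: (G z x) => [g| |] //=.
- by rewrite lte_fin => g_gt0; rewrite -EFinM lee_fin => hK; exists g.
- by rewrite gt0_mulye ?lte_fin // leye_eq.
Qed.

Lemma rhot_gt0 z x : z <> x -> 0 < rhot z x.
Proof.
case: rhot_metric => rhot_ge0 rhot_eq0 _ _ zx.
by rewrite lt_neqAle rhot_ge0 andbT; apply/eqP => /esym/(rhot_eq0 z x).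
Qed.

(* From [G(z,x) <= C rhot(z,x)^-gamma]: [G(z,x)^-1 < r^gamma / C] forces
   [rhot(z,x)^gamma < r^gamma]. *)
Lemma Vset_sub_mball x r :
  0 < r -> Vset G x (r `^ gamma / C) `<=` mball rhot x r.
Proof.
move=> r_gt0 z; rewrite /Vset /mball /=.
have [-> _|zx] := pselect (z = x); first exact: mball_center.
have [g [-> g_gt0 _ hg]] := G_fin_of_Gt_le (Gt_le zx).
rewrite inver gt_eqF // lte_fin ltr_pdivlMr // => hs.
have zx_gt0 := rhot_gt0 zx.
have zxg_gt0 : 0 < rhot z x `^ gamma by exact: powR_gt0.
have g_le : g * rhot z x `^ gamma <= C.
  rewrite -ler_pdivlMr // -powRN; apply: le_trans hg.
  by rewrite ler_pdivlMr ?mulr_gt0 ?w_gt0 // ler_piMr ?wM_le1 // ltW.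
have C_lt : C < g * r `^ gamma.
  by move: hs; rewrite -(ltr_pM2l g_gt0) mulrA mulfV ?gt_eqF // mul1r.
have : rhot z x `^ gamma < r `^ gamma by rewrite -(ltr_pM2l g_gt0); lra.
case: rhot_metric => _ _ rhot_sym _; rewrite (rhot_sym x z) => pow_lt.
rewrite ltNge; apply: contraTN pow_lt => r_le; rewrite -leNgt.
by apply: (ge0_ler_powR (ltW gamma_gt0) _ _ r_le); rewrite nnegrE ltW.
Qed.

End GreenBounds.

Lemma weighted_constant_identity (F : fieldType) (C c3 lam P g a b : F) :
  C != 0 -> c3 != 0 -> lam != 0 -> a != 0 -> b != 0 ->
  (C * c3 / lam ^+ 2)^-1 * P * (g / (a * b)) =
    (lam / a * (c3^-1 * (P / C) * g)) * (lam / b).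
Proof. by move=> *; field; apply/and5P. Qed.

Section BallBounds.
Variables (R : realType) (d : measure_display) (X : measurableType d).
Variables (rho : X -> X -> R) (X0 : set X).
Variables (mu : set X -> X -> {measure set X -> \bar R}).
Variables (G : X -> X -> \bar R) (w : X -> R) (rhot : X -> X -> R).
Variables (gamma C c3 lam : R).
Hypothesis rho_metric : is_metric rho.
Hypothesis rho_borel : borel_structure rho.
Hypothesis mu_balayage : balayage_family rho mu.
Hypothesis G_gt0 : forall x y, (0 < G x y)%E.
Hypothesis w_01 : forall z, 0 < w z <= 1.
Hypothesis w_measurable : measurable_fun setT w.
Hypothesis rhot_metric : is_metric rhot.
Hypothesis gamma_gt0 : 0 < gamma.
Hypothesis C_gt0 : 0 < C.
Hypothesis c3_gt0 : 0 < c3.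
Hypothesis lam_gt0 : 0 < lam.
Hypothesis lam_w : forall z, X0 z -> lam <= w z.
Hypothesis Gt_le : forall {x y}, x <> y ->
  (Gt G w x y <= (C * rhot x y `^ (- gamma))%:E)%E.
Hypothesis G3'_c3 : forall {x}, X0 x -> forall {s : R}, 0 < s ->
  (s%:E < S0 rho X0 G x)%E -> forall {y}, ~ Vset G x s y ->
  ((c3^-1 * s)%:E * G y x <= eps_norm mu (mclosure rho (Vset G x s)) y)%E.

Lemma eps_norm_mclosure_mball_ge x r y :
  X0 x -> 0 < r -> (r%:E < R0t rho rhot X0 x)%E -> ~ mball rhot x r y ->
  ((c3^-1 * (r `^ gamma / C))%:E * G y x <=
     eps_norm mu (mclosure rho (mball rhot x r)) y)%E.
Proof.
move=> X0x r_gt0 r_lt y_notin.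
have [r' r_lt_r' ball_r'_X0] := lt_R0t r_lt.
have r'_gt0 : 0 < r' by lra.
set s := r `^ gamma / C.
have s_gt0 : 0 < s by rewrite divr_gt0 // powR_gt0.
have V_ball := Vset_sub_mball G_gt0 w_01 rhot_metric gamma_gt0 C_gt0 (@Gt_le).
have s_lt_S0 : (s%:E < S0 rho X0 G x)%E.
  apply: (@lt_le_trans _ _ (r' `^ gamma / C)%:E).
    rewrite lte_fin ltr_pM2r ?invr_gt0 //.
    by apply: gt0_ltr_powR; rewrite // nnegrE ltW.
  apply: ereal_sup_ubound; exists (r' `^ gamma / C) => //.
  split; first by rewrite divr_gt0 // powR_gt0.
  by apply: subset_trans ball_r'_X0; apply: mclosure_mono; exact: V_ball.
have y_notin_V : ~ Vset G x s y by move/(V_ball _ _ r_gt0).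
apply: le_trans (G3'_c3 X0x s_gt0 s_lt_S0 y_notin_V) _.
apply: (le_eps_norm mu_balayage); try exact: mopen_setC_mclosure.
by apply: mclosure_mono; exact: V_ball.
Qed.

Lemma teps_norm_mclosure_mball_ge x r y :
  X0 x -> 0 < r -> (r%:E < R0t rho rhot X0 x)%E -> ~ mball rhot x r y ->
  (((C * c3 / lam ^+ 2)^-1 * r `^ gamma)%:E * Gt G w y x <=
     teps_norm mu w (mclosure rho (mball rhot x r)) y)%E.
Proof.
move=> X0x r_gt0 r_lt y_notin.
have yx : y <> x.
  by move=> eyx; apply: y_notin; rewrite eyx; exact: mball_center.
have [g [G_yx g_gt0 -> _]] := G_fin_of_Gt_le G_gt0 w_01 (Gt_le yx).
have eps_ge := eps_norm_mclosure_mball_ge X0x r_gt0 r_lt y_notin.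
rewrite G_yx in eps_ge.
set A := mclosure rho (mball rhot x r) in eps_ge *.
have teps_ge : ((lam / w y)%:E * eps_norm mu A y <= teps_norm mu w A y)%E.
  apply: (teps_norm_ge mu_balayage) => //.
  - exact: mopen_setC_mclosure.
  - exact: measurable_mclosure.
  - exact: w_gt0.
  - exact: ltW.
  - by move=> z /(mclosure_mball_sub r_lt); exact: lam_w.
apply: le_trans teps_ge.
apply: le_trans (_ : ((lam / w y) * (c3^-1 * (r `^ gamma / C) * g))%:E <= _)%E; last first.
  by rewrite !EFinM lee_wpmul2l // lee_fin divr_ge0 ?ltW ?(w_gt0 w_01).
rewrite -EFinM lee_fin weighted_constant_identity ?gt_eqF ?(w_gt0 w_01) //.
have lam_wx : lam / w x <= 1.
  by rewrite ler_pdivrMr ?(w_gt0 w_01) // mul1r; exact: lam_w.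
by rewrite ler_piMr // !mulr_ge0 ?invr_ge0 ?powR_ge0 ?ltW ?(w_gt0 w_01).
Qed.

End BallBounds.

Theorem proposition7p4 (R : realType) (d : measure_display)
  (X : measurableType d) (rho : X -> X -> R) (X0 : set X)
  (mu : set X -> X -> {measure set X -> \bar R})
  (G : X -> X -> \bar R) (w : X -> R) :
  is_metric rho -> mseparable rho -> borel_structure rho ->
  mopen rho X0 -> X0 <> setT ->
  balayage_family rho mu ->
  (forall x y, (0 < G x y)%E) ->
  measurable_fun setT (fun p : (X * X)%type => G p.1 p.2) ->
  G2' rho X0 mu G w ->
  G3' rho X0 mu G ->
  forall (rhot : X -> X -> R) (gamma C : R),
  is_metric rhot -> same_topology rho rhot ->
  1 <= gamma -> 1 <= C ->
  (forall x y, x <> y ->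
     ((C^-1 * rhot x y `^ (- gamma))%:E <= Gt G w x y)%E /\
     (Gt G w x y <= (C * rhot x y `^ (- gamma))%:E)%E) ->
  exists c3t : R, 1 <= c3t /\
    forall x, X0 x -> forall r : R, 0 < r -> (r%:E < R0t rho rhot X0 x)%E ->
    forall y, ~ mball rhot x r y ->
      ((c3t^-1 * r `^ gamma)%:E * Gt G w y x <=
        teps_norm mu w (mclosure rho (mball rhot x r)) y)%E.
Proof.
move=> rho_metric _ rho_borel _ _ mu_balayage G_gt0 _
  [_ [[mw [w_01 _]] [_ [[lam0 lam0_gt0 lam0_w] _]]]] [c3 [c3_ge1 G3'_c3]]
  rhot gamma C rhot_metric _ gamma_ge1 C_ge1 Gt_bounds.
have Gt_le x y (xy : x <> y) := (Gt_bounds x y xy).2.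
pose lam := Num.min lam0 1.
have lam_gt0 : 0 < lam by rewrite lt_min lam0_gt0 ltr01.
have lam_le1 : lam <= 1 by rewrite ge_min lexx orbT.
have lam_w z : X0 z -> lam <= w z by move/lam0_w; apply: le_trans; rewrite ge_min lexx.
exists (C * c3 / lam ^+ 2); split.
  rewrite ler_pdivlMr ?exprn_gt0 // mul1r (@le_trans _ _ 1) //.
    by rewrite expr2 mulr_ile1 // ltW.
  by rewrite -[1](mulr1 1) ler_pM.
move=> x X0x r r_gt0 r_lt y.
apply: (teps_norm_mclosure_mball_ge rho_metric rho_borel mu_balayage G_gt0 w_01 mw
  rhot_metric _ _ _ lam_gt0 lam_w Gt_le G3'_c3) => //; lra.
Qed.
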